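(* Let $p$ be an odd prime, and let $L$ be a Lie sublattice of a saturable $\mathbb{Z}_p$-Lie lattice $S$. Then the isolator $\mathrm{iso}_S(L)$ is saturable and $|\mathrm{iso}_S(L):L|<\infty$; in particular, $L$ and $\mathrm{iso}_S(L)$ have the same dimension. Furthermore, if $L$ is a Lie ideal of $S$, then $\mathrm{iso}_S(L)$ is PF-embedded in $S$.
   Context: A $\mathbb{Z}_p$-Lie lattice is a Lie algebra over $\mathbb{Z}_p$ free of finite rank as a module (dimension = rank). The isolator of a Lie sublattice $L$ in $S$ is $\mathrm{iso}_S(L)=S\cap(\mathbb{Q}_p\otimes L)$ (inside $\mathbb{Q}_p\otimes S$). For an ideal $M$ of $S$, a potent filtration of $M$ in $S$ is a descending series $(M_i)_{i\in\mathbb{N}}$ of ideals of $S$ with $M_1=M$, $\bigcap M_i=0$, $[M_i,S]\subseteq M_{i+1}$, $[M_i,S,\ldots,S]\subseteq pM_{i+1}$ ($p-1$ copies of $S$, brackets left-normed); $M$ is PF-embedded if such exists; a Lie lattice is saturable iff it admits a potent filtration of itself. *)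

From HB Require Import structures.
From mathcomp Require Import all_boot all_order all_algebra.
From mathcomp Require Import boolp.
Set Implicit Arguments.
Unset Strict Implicit.
Unset Printing Implicit Defensive.
Import Order.TTheory GRing.Theory Num.Theory.
Local Open Scope ring_scope.

(* The ring Z_p of p-adic integers, built as the inverse limit of Z/p^n Z:   *)
(* an element is a coherent sequence (x_n)_n of integers with                *)
(* 0 <= x_n < p^n (x_n = x_n mod p^n) and x_{n+1} = x_n mod p^n.             *)
Section Padic.
Variable p : nat.

Definition pw (n : nat) : int := (p ^ n)%N%:Z.

Record zp := ZP {
  zs : nat -> int;
  zs_coh : forall n, (zs n.+1 %% pw n)%Z = zs n;
  zs_red : forall n, (zs n %% pw n)%Z = zs n }.

HB.instance Definition _ := gen_eqMixin zp.
HB.instance Definition _ := gen_choiceMixin zp.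

Lemma zp_inj (x y : zp) : zs x = zs y -> x = y.
Proof.
case: x y => [f cf rf] [g cg rg] /= efg; subst g.
by rewrite (Prop_irrelevance cf cg) (Prop_irrelevance rf rg).
Qed.

Lemma pw_dvd n : (pw n %| pw n.+1)%Z.
Proof. by rewrite /pw /dvdz /= unfold_in /= expnS dvdn_mull. Qed.

Lemma modz_dvdm (d m x : int) : (d %| m)%Z -> (((x %% m)%Z %% d)%Z = (x %% d)%Z).
Proof.
move=> dm; apply/eqP; rewrite eqz_mod_dvd.
have -> : (x %% m)%Z - x = - ((x %/ m)%Z * m).
  by rewrite {2}(divz_eq x m) opprD addrCA subrr addr0.
by rewrite dvdzE abszN -dvdzE dvdz_mull.
Qed.

Lemma zs_cong (x : zp) n : (zs x n.+1 = zs x n %[mod pw n])%Z.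
Proof. by rewrite zs_coh zs_red. Qed.

Section Mk.
Variable g : nat -> int.
Hypothesis gP : forall n, (g n.+1 = g n %[mod pw n])%Z.

Lemma mk_coh n : ((g n.+1 %% pw n.+1)%Z %% pw n)%Z = (g n %% pw n)%Z.
Proof. by rewrite modz_dvdm ?pw_dvd // gP. Qed.

Lemma mk_red n : ((g n %% pw n)%Z %% pw n)%Z = (g n %% pw n)%Z.
Proof. exact: modz_mod. Qed.

Definition zp_mk : zp := @ZP (fun n => (g n %% pw n)%Z) mk_coh mk_red.
End Mk.

Lemma zs_mk g gP n : zs (@zp_mk g gP) n = (g n %% pw n)%Z.
Proof. by []. Qed.

Lemma cst_coh (c : int) n : (c = c %[mod pw n])%Z. Proof. by []. Qed.

Definition zp0 : zp := zp_mk (cst_coh 0).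
Definition zp1 : zp := zp_mk (cst_coh 1).

Lemma add_coh (x y : zp) n :
  (zs x n.+1 + zs y n.+1 = zs x n + zs y n %[mod pw n])%Z.
Proof. by rewrite -modzDm !zs_cong modzDm. Qed.
Definition zp_add (x y : zp) : zp := zp_mk (add_coh x y).

Lemma opp_coh (x : zp) n : (- zs x n.+1 = - zs x n %[mod pw n])%Z.
Proof. by rewrite -modzNm zs_cong modzNm. Qed.
Definition zp_opp (x : zp) : zp := zp_mk (opp_coh x).

Lemma mul_coh (x y : zp) n :
  (zs x n.+1 * zs y n.+1 = zs x n * zs y n %[mod pw n])%Z.
Proof. by rewrite -modzMm !zs_cong modzMm. Qed.
Definition zp_mul (x y : zp) : zp := zp_mk (mul_coh x y).

Lemma zp_addA : associative zp_add.
Proof.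
move=> x y z; apply: zp_inj; apply: funext => n /=.
by rewrite modzDml modzDmr addrA.
Qed.

Lemma zp_addC : commutative zp_add.
Proof. by move=> x y; apply: zp_inj; apply: funext => n /=; rewrite addrC. Qed.

Lemma zp_add0 : left_id zp0 zp_add.
Proof.
by move=> x; apply: zp_inj; apply: funext => n /=; rewrite modzDml add0r zs_red.
Qed.

Lemma zp_addN : left_inverse zp0 zp_opp zp_add.
Proof.
by move=> x; apply: zp_inj; apply: funext => n /=; rewrite modzDml addNr.
Qed.

HB.instance Definition _ := GRing.isZmodule.Build zp zp_addA zp_addC zp_add0 zp_addN.

Lemma zp_mulA : associative zp_mul.
Proof.
move=> x y z; apply: zp_inj; apply: funext => n /=.
by rewrite modzMml modzMmr mulrA.
Qed.

Lemma zp_mulC : commutative zp_mul.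
Proof. by move=> x y; apply: zp_inj; apply: funext => n /=; rewrite mulrC. Qed.

Lemma zp_mul1 : left_id zp1 zp_mul.
Proof.
by move=> x; apply: zp_inj; apply: funext => n /=; rewrite modzMml mul1r zs_red.
Qed.

Lemma zp_mulDl : left_distributive zp_mul zp_add.
Proof.
move=> x y z; apply: zp_inj; apply: funext => n /=.
by rewrite modzMml modzDm mulrDl.
Qed.

HB.instance Definition _ :=
  GRing.Zmodule_isComPzRing.Build zp zp_mulA zp_mulC zp_mul1 zp_mulDl.

End Padic.

Notation "''Z_p[' p ]" := (zp p) (format "''Z_p[' p ]").

(* Z_p-Lie lattices.  A Z_p-Lie lattice of dimension d is (up to isomorphism)*)
(* the free module 'rV['Z_p]_d equipped with a Lie bracket.  Sublattices,    *)
(* ideals, filtrations are subsets (V -> Prop) of an ambient Lie lattice.    *)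
Section Lie.
Variables (p d : nat).
Local Notation V := 'rV['Z_p[p]]_d.

Definition lie_bracket (br : V -> V -> V) : Prop :=
  [/\ forall (a : 'Z_p[p]) x y z, br (a *: x + y) z = a *: br x z + br y z,
      forall (a : 'Z_p[p]) x y z, br z (a *: x + y) = a *: br z x + br z y,
      forall x, br x x = 0
    & forall x y z, br x (br y z) + br y (br z x) + br z (br x y) = 0].

Variable br : V -> V -> V.

Definition submod (A : V -> Prop) : Prop :=
  [/\ A 0, forall x y, A x -> A y -> A (x + y)
    & forall (a : 'Z_p[p]) x, A x -> A (a *: x)].

Definition incl (A B : V -> Prop) : Prop := forall x, A x -> B x.

Definition lie_sublattice (S L : V -> Prop) : Prop :=
  [/\ submod L, incl L S & forall x y, L x -> L y -> L (br x y)].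

Definition lie_ideal (S M : V -> Prop) : Prop :=
  [/\ submod M, incl M S & forall x s, M x -> S s -> M (br x s)].

Definition pmul (M : V -> Prop) : V -> Prop :=
  fun y => exists2 m, M m & y = (p%:R : 'Z_p[p]) *: m.

Fixpoint itbr (x : V) (s : seq V) : V :=
  if s is t :: s' then itbr (br x t) s' else x.

(* The paper's index set is N = {1,2,...}
   with M_1 = M; here F i stands for M_{i+1}.  Since each M_{i+1} (resp.
   p M_{i+1}) is a submodule, the inclusions of the (spans of) brackets
   [M_i,S] and [M_i,S,...,S] are stated on generators. *)
Definition potent_filtration (S M : V -> Prop) (F : nat -> V -> Prop) : Prop :=
  [/\ F 0 = M,
      forall i, lie_ideal S (F i),
      forall i, incl (F i.+1) (F i)
    & forall x, (forall i, F i x) -> x = 0] /\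
  [/\ forall i x s, F i x -> S s -> F i.+1 (br x s)
    & forall i x (s : seq V), F i x -> size s = p.-1 ->
        (forall t, t \in s -> S t) -> pmul (F i.+1) (itbr x s)].

Definition PF_embedded (S M : V -> Prop) : Prop :=
  exists F, potent_filtration S M F.

Definition saturable (L : V -> Prop) : Prop := PF_embedded L L.

(* Isolator iso_S(L) = S \cap (Q_p \otimes L).  Inside Q_p \otimes S an
   element lies in Q_p \otimes L = \bigcup_n p^-n L iff some p^n-multiple of
   it lies in L. *)
Definition isolator (S L : V -> Prop) : V -> Prop :=
  fun x => S x /\ exists n : nat, L (((p%:R : 'Z_p[p]) ^+ n) *: x).

(* |A : B| < oo for B <= A: finitely many cosets of B meet A. *)
Definition finite_index (A B : V -> Prop) : Prop :=
  exists s : seq V, forall x, A x -> exists2 y, y \in s & B (x - y).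

Definition free_of_rank (A : V -> Prop) (r : nat) : Prop :=
  exists b : 'I_r -> V,
    (forall x, A x <-> exists c : 'I_r -> 'Z_p[p], x = \sum_i c i *: b i) /\
    (forall c : 'I_r -> 'Z_p[p], \sum_i c i *: b i = 0 -> forall i, c i = 0).
End Lie.

(* The isolator I of L is a submodule containing L which is isolated (p m in I
   forces m in I) and stable under brackets with I, and even with the whole
   lattice when L is an ideal.  Intersecting a potent filtration (F_i) of the
   ambient lattice with I therefore gives a potent filtration: a left-normed
   bracket of an element of I lies in p F_(i+1) and in I, hence in
   p (F_(i+1) cap I) by isolation.

   For the lattice statements work coordinate by coordinate: the part of a
   submodule supported on the first k coordinates gains exactly one free
   generator when passing to k+1 coordinates iff some element has a nonzero
   k-th coordinate, and this happens for L and I simultaneously because every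
   element of I has a p-power multiple in L.  Finally a single power p^N maps a
   basis of I into L, so every element of I is congruent modulo L to a
   combination of that basis with coefficients in 0..p^N-1. *)
From HB Require Import structures.
From mathcomp Require Import all_boot all_order all_algebra ring.
From mathcomp Require Import boolp.
From Pilot Require Import Defs.
Set Implicit Arguments.
Unset Strict Implicit.
Unset Printing Implicit Defensive.
Import Order.TTheory GRing.Theory Num.Theory.
Local Open Scope ring_scope.

Section PadicArithmetic.
Variable p : nat.
Hypothesis p_prime : prime p.
Local Notation Z := 'Z_p[p].
Local Notation pw := (pw p).
Local Notation P := (p%:R : Z).

Lemma zsD (x y : Z) n : zs (x + y) n = ((zs x n + zs y n) %% pw n)%Z.
Proof. by []. Qed.

Lemma zsM (x y : Z) n : zs (x * y) n = ((zs x n * zs y n) %% pw n)%Z.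
Proof. by []. Qed.

Lemma zsN (x : Z) n : zs (- x) n = ((- zs x n) %% pw n)%Z.
Proof. by []. Qed.

Lemma zs0 n : zs (0 : Z) n = 0.
Proof. by rewrite /= mod0z. Qed.

Lemma zs_at0 (x : Z) : zs x 0 = 0.
Proof. by rewrite -zs_red modz1. Qed.

Lemma pw_gt0 n : 0 < pw n.
Proof. by rewrite /Defs.pw ltz_nat expn_gt0 prime_gt0. Qed.

Lemma pw_neq0 n : pw n != 0.
Proof. by rewrite gt_eqF ?pw_gt0. Qed.

Lemma pwD m n : pw (m + n) = pw m * pw n.
Proof. by rewrite /Defs.pw expnD PoszM. Qed.

Lemma zs_modle (x : Z) m n : (m <= n)%N -> (zs x n %% pw m)%Z = zs x m.
Proof.
move=> /subnKC <-; elim: (n - m)%N => [|k IH]; first by rewrite addn0 zs_red.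
have pw_dvd : (pw m %| pw (m + k))%Z by rewrite pwD dvdz_mulr.
by rewrite addnS -(modz_dvdm _ pw_dvd) zs_coh IH.
Qed.

Lemma zp_eq0 (x : Z) : (forall n, zs x n = 0) -> x = 0.
Proof. by move=> x0; apply: zp_inj; apply: funext => n; rewrite x0 zs0. Qed.

Lemma zs_nat k n : zs (k%:R : Z) n = (k%:Z %% pw n)%Z.
Proof.
elim: k => [|k IH]; first by rewrite zs0 mod0z.
by rewrite mulrS zsD IH /= modzDm -addn1 PoszD addrC.
Qed.

Lemma zs_expP e n : zs (P ^+ e) n = (pw e %% pw n)%Z.
Proof. by rewrite -natrX zs_nat. Qed.

Lemma zs_expP_diag e : zs (P ^+ e) e = 0.
Proof. by rewrite zs_expP modzz. Qed.

Lemma expP_neq0 e : P ^+ e != 0.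
Proof.
apply/eqP => Pe0; have := zs_expP e e.+1; rewrite Pe0 zs0 modz_small.
  by move/esym/eqP; rewrite (negPf (pw_neq0 e)).
by rewrite ltW ?pw_gt0 //= /Defs.pw ltz_nat ltn_exp2l ?prime_gt1.
Qed.

Lemma expP_mulI (x : Z) e : P ^+ e * x = 0 -> x = 0.
Proof.
move=> Px0; apply: zp_eq0 => n.
have := zs0 (n + e); rewrite -Px0 zsM zs_expP modzMml => /dvdz_mod0P.
rewrite pwD (mulrC (pw n)) dvdz_mul2l ?pw_neq0 // => /dvdz_mod0P.
by rewrite zs_modle ?leq_addr.
Qed.

Lemma zs_eq0_expP_dvd (x : Z) e : zs x e = 0 -> exists y, x = P ^+ e * y.
Proof.
move=> xe0.
have dvd_x n : (pw e %| zs x (n + e))%Z.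
  by apply/dvdz_mod0P; rewrite zs_modle ?leq_addl.
pose q n := (zs x (n + e) %/ pw e)%Z.
have qK n : q n * pw e = zs x (n + e) by rewrite divzK.
have q_coh n : (q n.+1 = q n %[mod pw n])%Z.
  apply/eqP; rewrite eqz_mod_dvd -(dvdz_mul2r (pw_neq0 e)) -pwD mulrBl !qK.
  by rewrite -eqz_mod_dvd addSn -(zs_coh x (n + e)) modz_mod.
exists (zp_mk q_coh); apply: zp_inj; apply: funext => n.
rewrite zsM zs_expP zs_mk modzMm (mulrC (pw e)) qK.
by rewrite zs_modle ?leq_addr.
Qed.

(* The inverse is assembled from Bezout inverses of x modulo each p^n. *)
Lemma zp_unit (x : Z) : zs x 1 != 0 -> exists y, x * y = 1.
Proof.
move=> x1.
have cop n : coprimez (pw n) (zs x n).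
  case: n => [|n]; first by rewrite /Defs.pw expn0 /coprimez gcd1z.
  rewrite coprimezE /= coprime_pexpl // prime_coprime //.
  apply: contra x1 => p_dvd; rewrite -(zs_modle x (isT : (1 <= n.+1)%N)).
  by apply/eqP/dvdz_mod0P; rewrite /Defs.pw expn1.
have inv_mod n : exists u, (pw n %| u * zs x n - 1)%Z.
  have := cop n; rewrite coprimez_sym => /coprimezP [[u v] /= uv].
  exists u; have -> : u * zs x n - 1 = - (v * pw n) by rewrite -uv; ring.
  by rewrite rpredN dvdz_mull.
case: (choice inv_mod) => f fP.
have f_coh n : (f n.+1 = f n %[mod pw n])%Z.
  apply/eqP; rewrite eqz_mod_dvd -(Gauss_dvdzl _ (cop n)).
  have h1 : (pw n %| f n.+1 * zs x n.+1 - 1)%Z.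
    by apply: dvdz_trans (fP n.+1); rewrite -addn1 pwD dvdz_mulr.
  have h2 : (pw n %| zs x n.+1 - zs x n)%Z by rewrite -eqz_mod_dvd zs_cong.
  have -> : (f n.+1 - f n) * zs x n = (f n.+1 * zs x n.+1 - 1)
      - f n.+1 * (zs x n.+1 - zs x n) - (f n * zs x n - 1) by ring.
  by apply: rpredB; [apply: rpredB; [exact: h1 | exact: dvdz_mull] | exact: fP].
exists (zp_mk f_coh); apply: zp_inj; apply: funext => n.
rewrite zsM zs_mk /= modzMmr mulrC; apply/eqP; rewrite eqz_mod_dvd; exact: fP.
Qed.

Lemma zp_valuation (x : Z) : x != 0 -> exists e, zs x e = 0 /\ zs x e.+1 != 0.
Proof.
move=> x0.
have ex_nz : exists n, zs x n.+1 != 0.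
  apply: contrapT => none; case/eqP: x0; apply: zp_eq0 => -[|n].
    exact: zs_at0.
  by apply/eqP/negbNE/negP => nz; apply: none; exists n.
case: (ex_minnP ex_nz) => e ze min_e; exists e; split=> //.
case: e ze min_e => [|e] _ min_e; first exact: zs_at0.
by apply/eqP/negbNE/negP => /min_e; rewrite ltnn.
Qed.

Lemma zs_valuation_dvd (a y : Z) e :
  zs a e = 0 -> zs a e.+1 != 0 -> zs y e = 0 -> exists c, y = c * a.
Proof.
move=> a0 a1 y0.
have [u au] := zs_eq0_expP_dvd a0; have [y' yy'] := zs_eq0_expP_dvd y0.
have u1 : zs u 1 != 0.
  apply: contra a1; rewrite au zsM zs_expP modzMml => /eqP u1.
  apply/eqP/dvdz_mod0P; rewrite -[in pw e.+1]addn1 pwD dvdz_mul2l ?pw_neq0 //.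
  by apply/dvdz_mod0P; rewrite zs_modle.
have [w uw] := zp_unit u1.
exists (y' * w); rewrite yy' au.
by rewrite -[LHS]mulr1 -uw; ring.
Qed.

Lemma zp_mulIf (x y : Z) : y != 0 -> x * y = 0 -> x = 0.
Proof.
move=> y0 xy0; have [e [ye0 ye1]] := zp_valuation y0.
have [c Pc] := zs_valuation_dvd ye0 ye1 (zs_expP_diag e).
by apply: (@expP_mulI _ e); rewrite Pc -mulrA [y * x]mulrC xy0 mulr0.
Qed.

(* Any element of Q of minimal valuation works. *)
Lemma exists_dvd_all (Q : Z -> Prop) : (exists2 x, Q x & x != 0) ->
  exists a, [/\ Q a, a != 0 & forall y, Q y -> exists c, y = c * a].
Proof.
move=> [x Qx x0]; have [e [_ xe1]] := zp_valuation x0.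
have ex_val : exists n, `[< exists2 y, Q y & zs y n.+1 != 0 >].
  by exists e; apply/asboolP; exists x.
case: (ex_minnP ex_val) => {x Qx x0 xe1} {}e /asboolP [a Qa ae1] min_e.
have zs_e0 y : Q y -> zs y e = 0.
  case: e ae1 min_e => [|e] _ min_e Qy; first exact: zs_at0.
  apply/eqP/negbNE/negP => ye.
  have /min_e : `[< exists2 y, Q y & zs y e.+1 != 0 >] by apply/asboolP; exists y.
  by rewrite ltnn.
exists a; split=> // [|y Qy]; first by apply: contraNneq ae1 => ->; rewrite zs0.
exact: zs_valuation_dvd (zs_e0 a Qa) ae1 (zs_e0 y Qy).
Qed.

Lemma zp_residue (c : Z) N :
  exists c1, c = (`|zs c N|%N)%:R + P ^+ N * c1 /\ (`|zs c N| < p ^ N)%N.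
Proof.
have ge0 : 0 <= zs c N by rewrite -zs_red modz_ge0 ?pw_neq0.
have lt : zs c N < pw N by rewrite -zs_red ltz_pmod ?pw_gt0.
have diff0 : zs (c - (`|zs c N|%N)%:R) N = 0.
  by rewrite zsD zsN modzDmr zs_nat gez0_abs // zs_red subrr mod0z.
have [c1 e] := zs_eq0_expP_dvd diff0.
by exists c1; split; [rewrite -e; ring | rewrite -ltz_nat gez0_abs].
Qed.

End PadicArithmetic.

Section Submodules.
Variables p d : nat.
Hypothesis p_prime : prime p.
Local Notation Z := 'Z_p[p].
Local Notation V := 'rV[Z]_d.
Local Notation P := (p%:R : Z).

Section SubmodClosure.
Variable A : V -> Prop.
Hypothesis sA : submod A.

Lemma submod0 : A 0. Proof. by case: sA. Qed.
Lemma submodD x y : A x -> A y -> A (x + y). Proof. by case: sA => _ + _; apply. Qed.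
Lemma submodZ a x : A x -> A (a *: x). Proof. by case: sA => _ _; apply. Qed.
Lemma submodN x : A x -> A (- x). Proof. by rewrite -scaleN1r; apply: submodZ. Qed.
Lemma submodB x y : A x -> A y -> A (x - y).
Proof. by move=> Ax Ay; apply: submodD (submodN _). Qed.

Lemma submod_sum r (F : 'I_r -> V) : (forall i, A (F i)) -> A (\sum_i F i).
Proof. by move=> AF; apply: (big_ind A) => //; [exact: submod0 | exact: submodD]. Qed.

End SubmodClosure.

Lemma free_of_rank_ext (A B : V -> Prop) r :
  (forall x, A x <-> B x) -> free_of_rank A r -> free_of_rank B r.
Proof. by move=> AB [b [bA b_free]]; exists b; split=> // x; rewrite -AB. Qed.

Lemma free_basis_mem (A : V -> Prop) r (b : 'I_r -> V) :
  (forall x, A x <-> exists c : 'I_r -> Z, x = \sum_i c i *: b i) ->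
  forall i, A (b i).
Proof.
move=> bA i; apply/bA; exists (fun k => (k == i)%:R).
rewrite (bigD1 i) //= eqxx scale1r big1 ?addr0 // => k /negPf ->.
by rewrite scale0r.
Qed.

Lemma unlift_max_widen r (i : 'I_r) : unlift ord_max (widen_ord (leqnSn r) i) = Some i.
Proof.
have -> : widen_ord (leqnSn r) i = lift ord_max i by apply: ord_inj; rewrite lift_max.
by rewrite liftK.
Qed.

Lemma free_of_rank_extend (A B : V -> Prop) r (j : 'I_d) (a : V) :
  submod A -> incl B A -> free_of_rank B r -> A a -> a 0 j != 0 ->
  (forall x, B x -> x 0 j = 0) -> (forall x, A x -> exists c, B (x - c *: a)) ->
  free_of_rank A r.+1.
Proof.
move=> sA BA [b [bB b_free]] Aa aj0 Bj0 A_dec.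
pose b' (i : 'I_r.+1) := if unlift ord_max i is Some k then b k else a.
have sumE (c : 'I_r.+1 -> Z) : \sum_i c i *: b' i =
    \sum_(k < r) c (widen_ord (leqnSn r) k) *: b k + c ord_max *: a.
  rewrite big_ord_recr /= /b' unlift_none; congr (_ + _).
  by apply: eq_bigr => k _; rewrite unlift_max_widen.
exists b'; split=> [x|c].
  split=> [Ax|[c ->]].
    have [c /bB[c0 e0]] := A_dec x Ax.
    exists (fun i => if unlift ord_max i is Some k then c0 k else c).
    rewrite sumE unlift_none.
    under eq_bigr => k _ do rewrite unlift_max_widen.
    by rewrite -e0 subrK.
  rewrite sumE; apply: submodD => //; last exact: submodZ.
  by apply: submod_sum => // k; apply: submodZ => //; apply: BA; apply: free_basis_mem bB k.
rewrite sumE => sum0.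
have c_max : c ord_max = 0.
  have := congr1 (fun v : V => v 0 j) sum0; rewrite /= !mxE summxE.
  rewrite big1 ?add0r => [|k _]; last by rewrite mxE Bj0 ?mulr0 //; apply: free_basis_mem bB k.
  exact: zp_mulIf.
rewrite c_max scale0r addr0 in sum0.
move=> i; case: (unliftP ord_max i) => [k ->|->] //.
by rewrite -(b_free _ sum0 k); congr c; apply: ord_inj; rewrite lift_max.
Qed.

Definition supp_lt (A : V -> Prop) k : V -> Prop :=
  fun x => A x /\ forall j : 'I_d, (k <= j)%N -> x 0 j = 0.

Lemma supp_lt_submod (A : V -> Prop) k : submod A -> submod (supp_lt A k).
Proof.
move=> sA; split.
- by split=> [|j _]; [exact: submod0 | rewrite mxE].
- move=> x y [Ax x0] [Ay y0]; split=> [|j kj]; first exact: submodD.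
  by rewrite mxE x0 ?y0 ?addr0.
- move=> c x [Ax x0]; split=> [|j kj]; first exact: submodZ.
  by rewrite mxE x0 ?mulr0.
Qed.

Lemma supp_lt_dim (A : V -> Prop) x : supp_lt A d x <-> A x.
Proof. by split=> [[]//|Ax]; split=> // j; rewrite leqNgt ltn_ord. Qed.

Lemma supp_lt_incl (A B : V -> Prop) k : incl A B -> incl (supp_lt A k) (supp_lt B k).
Proof. by move=> AB x [Ax x0]; split; first exact: AB. Qed.

Lemma supp_ltS (A : V -> Prop) k : incl (supp_lt A k) (supp_lt A k.+1).
Proof. by move=> x [Ax x0]; split=> // j kj; apply/x0/ltnW. Qed.

Lemma supp_lt_coord (A : V -> Prop) k (kd : (k < d)%N) x :
  supp_lt A k x -> x 0 (Ordinal kd) = 0.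
Proof. by case=> _; apply. Qed.

Lemma supp_ltSW (A : V -> Prop) k (kd : (k < d)%N) x :
  supp_lt A k.+1 x -> x 0 (Ordinal kd) = 0 -> supp_lt A k x.
Proof.
move=> [Ax x0] xk0; split=> // j kj.
case: (ltngtP k j) => [kj'|jk|kj']; first exact: x0.
  by rewrite ltnNge kj in jk.
by rewrite -xk0; congr (x 0 _); apply: val_inj.
Qed.

Lemma supp_ltS_free (A : V -> Prop) k (kd : (k < d)%N) r :
  submod A -> free_of_rank (supp_lt A k) r ->
  (exists2 x, supp_lt A k.+1 x & x 0 (Ordinal kd) != 0) ->
  free_of_rank (supp_lt A k.+1) r.+1.
Proof.
move=> sA A_free [x Ax xk0].
pose Q t := exists2 y, supp_lt A k.+1 y & y 0 (Ordinal kd) = t.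
have Q_nz : exists2 t, Q t & t != 0 by exists (x 0 (Ordinal kd)); first exists x.
have [t [[a Aa a_t] ak0 a_dvd]] := exists_dvd_all p_prime Q_nz; subst t.
apply: (free_of_rank_extend _ _ A_free Aa ak0).
- exact: supp_lt_submod.
- exact: supp_ltS.
- exact: supp_lt_coord.
move=> y Ay; have [c yc] := a_dvd _ (ex_intro2 _ _ y Ay erefl).
have sA1 := supp_lt_submod k.+1 sA.
exists c; apply: supp_ltSW; first exact: submodB (submodZ sA1 _ Aa).
by rewrite !mxE yc subrr.
Qed.

Lemma supp_ltS_eq (A : V -> Prop) k (kd : (k < d)%N) :
  (forall x, supp_lt A k.+1 x -> x 0 (Ordinal kd) = 0) ->
  forall x, supp_lt A k.+1 x <-> supp_lt A k x.
Proof. by move=> k0 x; split=> [Ax|]; [apply: supp_ltSW (k0 x Ax) | apply: supp_ltS]. Qed.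

Lemma supp_lt0_free (A : V -> Prop) : submod A -> free_of_rank (supp_lt A 0) 0.
Proof.
move=> sA; exists (fun _ => 0); split=> [x|c _ []//]; split=> [[_ x0]|[c ->]].
  by exists (fun _ => 0); rewrite big_ord0; apply/rowP => j; rewrite x0 // mxE.
by rewrite big_ord0; apply: submod0; apply: supp_lt_submod.
Qed.

Lemma free_of_same_rank (L I : V -> Prop) : submod L -> submod I -> incl L I ->
  (forall x, I x -> exists n, L (P ^+ n *: x)) ->
  exists r, free_of_rank L r /\ free_of_rank I r.
Proof.
move=> sL sI LI I_L.
suff /(_ d (leqnn d)) [r [Lr Ir]] : forall k, (k <= d)%N ->
    exists r, free_of_rank (supp_lt L k) r /\ free_of_rank (supp_lt I k) r.
  by exists r; split; apply: free_of_rank_ext (supp_lt_dim _) _.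
elim=> [|k IH] kd; first by exists 0%N; split; apply: supp_lt0_free.
have [r [Lr Ir]] := IH (ltnW kd).
case: (pselect (exists2 x, supp_lt I k.+1 x & x 0 (Ordinal kd) != 0)) => [[x Ix xk0]|none].
  exists r.+1; split; last by apply: supp_ltS_free Ir _ => //; exists x.
  apply: supp_ltS_free Lr _ => //; case: Ix => Ix x0; have [n Lx] := I_L x Ix.
  exists (P ^+ n *: x); first by split=> // j kj; rewrite mxE x0 ?mulr0.
  rewrite mxE mulrC; apply: contra_neq xk0; exact: zp_mulIf (expP_neq0 p_prime n).
have Ik0 x : supp_lt I k.+1 x -> x 0 (Ordinal kd) = 0.
  by move=> Ix; apply/eqP/negbNE/negP => xk0; apply: none; exists x.
exists r; split; [apply: free_of_rank_ext Lr | apply: free_of_rank_ext Ir];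
  move=> x; apply: iff_sym; apply: supp_ltS_eq => // y Ly.
exact/Ik0/(supp_lt_incl LI).
Qed.

Lemma finite_index_of_free (L I : V -> Prop) r : submod L -> free_of_rank I r ->
  (forall x, I x -> exists n, L (P ^+ n *: x)) -> finite_index I L.
Proof.
move=> sL [b [bI _]] I_L.
have [n bn] := choice (fun i => I_L _ (free_basis_mem bI i)).
pose N := (\sum_i n i)%N.
have bN i : L (P ^+ N *: b i).
  have le_nN : (n i <= N)%N by rewrite /N (bigD1 i) //= leq_addr.
  by rewrite -(subnK le_nN) exprD -scalerA; apply: submodZ.
pose comb (f : {ffun 'I_r -> 'I_(p ^ N)}) := \sum_i ((f i : nat)%:R : Z) *: b i.
exists [seq comb f | f <- enum {ffun 'I_r -> 'I_(p ^ N)}] => _ /bI[c ->].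
have [c1 c1P] := choice (fun i => zp_residue p_prime (c i) N).
exists (comb [ffun i => Ordinal (c1P i).2]); first by apply: map_f; rewrite mem_enum.
rewrite -sumrB; apply: submod_sum => // i; rewrite ffunE /= -scalerBl.
have -> : c i - (`|zs (c i) N|%N)%:R = P ^+ N * c1 i.
  by rewrite {1}(c1P i).1 addrC addKr.
by rewrite mulrC -scalerA; apply: submodZ.
Qed.

End Submodules.

Section Isolator.
Variables p d : nat.
Local Notation Z := 'Z_p[p].
Local Notation V := 'rV[Z]_d.
Local Notation P := (p%:R : Z).
Variable br : V -> V -> V.
Hypothesis br_lie : lie_bracket br.

Lemma br_scalel a x z : br (a *: x) z = a *: br x z.
Proof.
case: br_lie => br_linl _ _ _.
have br0 : br 0 z = 0.
  have := br_linl 1 0 0 z; rewrite !scale1r addr0 => br00.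
  by apply: (addrI (br 0 z)); rewrite addr0 -br00.
by rewrite -[a *: x]addr0 br_linl br0 addr0.
Qed.

Lemma br_scaler a x z : br z (a *: x) = a *: br z x.
Proof.
case: br_lie => _ br_linr _ _.
have br0 : br z 0 = 0.
  have := br_linr 1 0 0 z; rewrite !scale1r addr0 => brz0.
  by apply: (addrI (br z 0)); rewrite addr0 -brz0.
by rewrite -[a *: x]addr0 br_linr br0 addr0.
Qed.

Definition isolated (A : V -> Prop) : Prop := forall m, A (P *: m) -> A m.

Lemma itbr_closed (J T : V -> Prop) : (forall x y, J x -> T y -> J (br x y)) ->
  forall (s : seq V) x, J x -> (forall t, t \in s -> T t) -> J (itbr br x s).
Proof.
move=> JT; elim=> [//|t s IH] x Jx sT /=.
by apply: IH => [|u us]; [apply: JT Jx _; apply: sT; rewrite mem_head |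
  apply: sT; rewrite in_cons us orbT].
Qed.

Lemma potent_filtration_restrict (S M T J : V -> Prop) F :
  potent_filtration br S M F -> submod J -> isolated J ->
  incl J M -> incl J T -> incl T S -> (forall x s, J x -> T s -> J (br x s)) ->
  potent_filtration br T J (fun i y => J y /\ F i y).
Proof.
move=> [[F0 F_ideal F_decr F_sep] [F_br F_potent]] sJ J_iso JM JT TS J_br.
split; split.
- by apply: funext => y; apply: propext; rewrite F0; split=> [[]|Jy]; last split; auto.
- move=> i; case: (F_ideal i) => sF _ F_br_i; split.
  + split; first by split; apply: submod0.
      by move=> x y [Jx Fx] [Jy Fy]; split; apply: submodD.
    by move=> a x [Jx Fx]; split; apply: submodZ.
  + by move=> x [Jx _]; apply: JT.
  + by move=> x s [Jx Fx] Ts; split; [apply: J_br | apply/F_br_i/TS].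
- by move=> i x [Jx Fx]; split=> //; apply: F_decr.
- by move=> x JF; apply: F_sep => i; case: (JF i).
- by move=> i x s [Jx Fx] Ts; split; [apply: J_br | apply/F_br/TS].
move=> i x s [Jx Fx] size_s sT.
have [m Fm xs_m] := F_potent i x s Fx size_s (fun t st => TS t (sT t st)).
exists m => //; split=> //; apply: J_iso; rewrite -xs_m.
exact: itbr_closed J_br s x Jx sT.
Qed.

Variable L : V -> Prop.
Local Notation I := (isolator (fun _ => True) L).

Lemma isolator_submod : submod L -> submod I.
Proof.
move=> sL; split.
- by split=> //; exists 0%N; rewrite scaler0; apply: submod0.
- move=> x y [_ [n Lx]] [_ [m Ly]]; split=> //; exists (n + m)%N.
  rewrite scalerDr; apply: submodD => //.
    by rewrite exprD mulrC -scalerA; apply: submodZ.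
  by rewrite exprD -scalerA; apply: submodZ.
- move=> a x [_ [n Lx]]; split=> //; exists n.
  by rewrite scalerA mulrC -scalerA; apply: submodZ.
Qed.

Lemma sub_isolator : incl L I.
Proof. by move=> x Lx; split=> //; exists 0%N; rewrite expr0 scale1r. Qed.

Lemma isolator_isolated : isolated I.
Proof. by move=> m [_ [n Lm]]; split=> //; exists n.+1; rewrite exprSr -scalerA. Qed.

Lemma isolator_br : (forall x y, L x -> L y -> L (br x y)) ->
  forall x y, I x -> I y -> I (br x y).
Proof.
move=> L_br x y [_ [n Lx]] [_ [m Ly]]; split=> //; exists (n + m)%N.
by rewrite exprD -scalerA -br_scaler -br_scalel; apply: L_br.
Qed.

Lemma isolator_br_ideal : (forall x s, L x -> L (br x s)) ->
  forall x s, I x -> I (br x s).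
Proof.
move=> L_br x s [_ [n Lx]]; split=> //; exists n.
by rewrite -br_scalel; apply: L_br.
Qed.

End Isolator.

Theorem mainTheorem10 (p d : nat) (p_prime : prime p) (p_odd : odd p)
  (br : 'rV['Z_p[p]]_d -> 'rV['Z_p[p]]_d -> 'rV['Z_p[p]]_d)
  (br_lie : lie_bracket br)
  (S_sat : saturable br (fun _ => True))
  (L : 'rV['Z_p[p]]_d -> Prop)
  (L_sub : lie_sublattice br (fun _ => True) L) :
  let I := isolator (fun _ => True) L in
  [/\ saturable br I,
      finite_index I L,
      exists r, free_of_rank L r /\ free_of_rank I r
    & lie_ideal br (fun _ => True) L -> PF_embedded br (fun _ => True) I].
Proof.
move=> I; case: L_sub => sL _ L_br; case: S_sat => F F_potent.
have sI : submod I := isolator_submod sL.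
have I_L x : I x -> exists n, L ((p%:R : 'Z_p[p]) ^+ n *: x) by case.
have [r [Lr Ir]] := free_of_same_rank p_prime sL sI (@sub_isolator _ _ L) I_L.
have restrict T : incl I T -> (forall x s, I x -> T s -> I (br x s)) ->
    PF_embedded br T I.
  move=> IT I_br; exists (fun i y => I y /\ F i y).
  exact: potent_filtration_restrict F_potent sI (@isolator_isolated _ _ L) _ IT _ I_br.
split.
- by apply: restrict => // x s Ix Is; apply: isolator_br.
- exact: (finite_index_of_free p_prime sL Ir I_L).
- by exists r.
case=> _ _ L_ideal; apply: restrict => // x s Ix _.
by apply: isolator_br_ideal => // y t Ly; apply: L_ideal.
Qed.
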